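(* Let $X$ be any topological space with basepoint $\ast\in X$, and let $H$ be an open subgroup of the free Graev topological group $F_G(X,\ast)$. Then $H$ (with the subspace topology) is isomorphic, as a topological group, to a free Graev topological group $F_G(Z,z_0)$ for some based space $(Z,z_0)$.
   Context: No separation axioms are assumed on $X$. The free Graev topological group on a based space $(X,\ast)$ is the topological group $F_G(X,\ast)$ together with a continuous map $\sigma_\ast:X\to F_G(X,\ast)$ with $\sigma_\ast(\ast)=e$ (the identity), universal in the sense that every continuous map $f:X\to G$ into a topological group $G$ with $f(\ast)=e$ induces a unique continuous homomorphism $\tilde f:F_G(X,\ast)\to G$ with $\tilde f\sigma_\ast=f$. Algebraically it is the free group on $X\setminus\{\ast\}$. *)

Set Implicit Arguments.

Record topology (X : Type) : Type := Topology {
  open : (X -> Prop) -> Prop;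
  open_full : open (fun _ => True);
  open_inter : forall U V, open U -> open V -> open (fun x => U x /\ V x);
  open_union : forall F : (X -> Prop) -> Prop,
      (forall U, F U -> open U) -> open (fun x => exists U, F U /\ U x)
}.

Definition continuous {X Y : Type} (tX : topology X) (tY : topology Y)
  (f : X -> Y) : Prop :=
  forall V, open tY V -> open tX (fun x => V (f x)).

Definition prod_open {X Y : Type} (tX : topology X) (tY : topology Y)
  (W : X * Y -> Prop) : Prop :=
  forall p, W p -> exists A B, open tX A /\ open tY B /\ A (fst p) /\ B (snd p)
    /\ forall x y, A x -> B y -> W (x, y).

Record topgroup : Type := TopGroup {
  tg_car :> Type;
  tg_mul : tg_car -> tg_car -> tg_car;
  tg_inv : tg_car -> tg_car;
  tg_one : tg_car;
  tg_top : topology tg_car;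
  tg_assoc : forall x y z, tg_mul x (tg_mul y z) = tg_mul (tg_mul x y) z;
  tg_mul1g : forall x, tg_mul tg_one x = x;
  tg_mulg1 : forall x, tg_mul x tg_one = x;
  tg_mulVg : forall x, tg_mul (tg_inv x) x = tg_one;
  tg_mulgV : forall x, tg_mul x (tg_inv x) = tg_one;
  tg_mul_cont : forall W, open tg_top W ->
      prod_open tg_top tg_top (fun p => W (tg_mul (fst p) (snd p)));
  tg_inv_cont : continuous tg_top tg_top tg_inv
}.

Definition is_hom (G K : topgroup) (f : G -> K) : Prop :=
  forall x y, f (tg_mul G x y) = tg_mul K (f x) (f y).

Definition is_free_graev (X : Type) (tX : topology X) (x0 : X)
  (G : topgroup) (sigma : X -> G) : Prop :=
  continuous tX (tg_top G) sigma /\ sigma x0 = tg_one G /\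
  forall (K : topgroup) (f : X -> K),
    continuous tX (tg_top K) f -> f x0 = tg_one K ->
    exists g : G -> K,
      is_hom G K g /\ continuous (tg_top G) (tg_top K) g /\
      (forall x, g (sigma x) = f x) /\
      (forall g' : G -> K, is_hom G K g' -> continuous (tg_top G) (tg_top K) g' ->
         (forall x, g' (sigma x) = f x) -> forall y, g' y = g y).

Definition open_subgroup (G : topgroup) (H : G -> Prop) : Prop :=
  open (tg_top G) H /\ H (tg_one G) /\
  (forall x y, H x -> H y -> H (tg_mul G x y)) /\
  (forall x, H x -> H (tg_inv G x)).

Definition topgroup_iso_onto (K G : topgroup) (H : G -> Prop) (phi : K -> G) : Prop :=
  is_hom K G phi /\
  (forall a b, phi a = phi b -> a = b) /\
  (forall y, H y <-> exists k, phi k = y) /\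
  continuous (tg_top K) (tg_top G) phi /\
  (forall U, open (tg_top K) U ->
     exists V, open (tg_top G) V /\ forall k, U k <-> V (phi k)).

From Stdlib Require Import FunctionalExtensionality PropExtensionality ProofIrrelevance
  ClassicalEpsilon Classical Wf_nat Arith Lia.

(* Let (F, sigma) be free on the based space (X, x0) and H an open subgroup.
   Since F is generated by sigma(X), there is a Schreier transversal s for the
   right cosets of H.  The elements  elt t w = s(t) w s(t w)^-1  lie in H.  Let
   Z be the quotient of (H\F) x X collapsing the edges of the Schreier tree to a
   base point, and tau : Z -> H the map (v, x) |-> elt v sigma(x).  Then (H, tau)
   is free on Z.  Extensions: a based map f : Z -> L is lifted to a map
   X -> L wr (H\F) into a topological wreath product (a topological group because
   H is open), extended to F by freeness, and read off at the trivial coset; the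
   Schreier property makes this an extension of f.  Uniqueness: a continuous
   homomorphism out of H is recovered from a homomorphism F -> L wr (H\F), which
   is determined by its values on sigma(X). *)

Notation "x *g y" := (tg_mul _ x y) (at level 40, left associativity).
Notation "x ^-1" := (tg_inv _ x) (at level 2, left associativity, format "x ^-1").
Notation one := (tg_one _).

Section GroupAlgebra.
Variable G : topgroup.
Implicit Types a b c : G.

Lemma mulgA a b c : a *g (b *g c) = a *g b *g c. Proof. apply tg_assoc. Qed.
Lemma mul1g a : one *g a = a. Proof. apply tg_mul1g. Qed.
Lemma mulg1 a : a *g one = a. Proof. apply tg_mulg1. Qed.
Lemma mulVg a : a^-1 *g a = one. Proof. apply tg_mulVg. Qed.
Lemma mulgV a : a *g a^-1 = one. Proof. apply tg_mulgV. Qed.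

Lemma mulKg a b : a^-1 *g (a *g b) = b.
Proof. rewrite mulgA, mulVg, mul1g. reflexivity. Qed.
Lemma mulgK a b : a *g b *g b^-1 = a.
Proof. rewrite <- mulgA, mulgV, mulg1. reflexivity. Qed.
Lemma mulgKV a b : a *g b^-1 *g b = a.
Proof. rewrite <- mulgA, mulVg, mulg1. reflexivity. Qed.

Lemma mulg_cancel_l a b c : a *g b = a *g c -> b = c.
Proof. intros E. rewrite <- (mulKg a b), <- (mulKg a c), E. reflexivity. Qed.

Lemma invg_unique a b : a *g b = one -> b = a^-1.
Proof. intros E. apply (mulg_cancel_l a). rewrite E, mulgV. reflexivity. Qed.

Lemma invgK a : a^-1^-1 = a.
Proof. symmetry. apply invg_unique, mulVg. Qed.
Lemma invMg a b : (a *g b)^-1 = b^-1 *g a^-1.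
Proof. symmetry. apply invg_unique. rewrite mulgA, mulgK, mulgV. reflexivity. Qed.
Lemma invg1 : (one : G)^-1 = one.
Proof. symmetry. apply invg_unique, mul1g. Qed.

Lemma idem_one a : a *g a = a -> a = one.
Proof. intros E. apply (mulg_cancel_l a). rewrite E, mulg1. reflexivity. Qed.
End GroupAlgebra.

Lemma hom_one (G K : topgroup) (g : G -> K) : is_hom G K g -> g one = one.
Proof. intros h. apply idem_one. rewrite <- h, mul1g. reflexivity. Qed.

Lemma hom_inv (G K : topgroup) (g : G -> K) : is_hom G K g -> forall a, g a^-1 = (g a)^-1.
Proof. intros h a. apply invg_unique. rewrite <- h, mulgV. apply hom_one, h. Qed.

Lemma open_ext {X} (t : topology X) (U V : X -> Prop) :
  (forall x, U x <-> V x) -> open t U -> open t V.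
Proof.
  intros E HU. replace V with U; auto.
  apply functional_extensionality; intros x; apply propositional_extensionality; auto.
Qed.

Lemma open_local {X} (t : topology X) (U : X -> Prop) :
  (forall x, U x -> exists O, open t O /\ O x /\ forall y, O y -> U y) -> open t U.
Proof.
  intros HL.
  apply (open_ext t (fun x => exists O, (open t O /\ forall y, O y -> U y) /\ O x)).
  - intros x; split.
    + intros [O [[_ HO] Ox]]; auto.
    + intros Ux. destruct (HL x Ux) as [O [? [? ?]]]. exists O; auto.
  - apply open_union. intros O [? _]; auto.
Qed.

Lemma cont_comp {X Y Z} (tX : topology X) (tY : topology Y) (tZ : topology Z) f g :
  continuous tX tY f -> continuous tY tZ g -> continuous tX tZ (fun x => g (f x)).
Proof. intros Hf Hg V HV. apply (Hf _ (Hg V HV)). Qed.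

Section Translations.
Variable G : topgroup.

Lemma open_lmul (c : G) V : open (tg_top G) V -> open (tg_top G) (fun x => V (c *g x)).
Proof.
  intros HV. apply open_local. intros x Vx.
  destruct (tg_mul_cont G V HV (c, x) Vx) as [A [B [HA [HB [Ac [Bx HAB]]]]]].
  exists B; repeat split; auto. intros y By. apply (HAB c y Ac By).
Qed.

Lemma open_rmul (c : G) V : open (tg_top G) V -> open (tg_top G) (fun x => V (x *g c)).
Proof.
  intros HV. apply open_local. intros x Vx.
  destruct (tg_mul_cont G V HV (x, c) Vx) as [A [B [HA [HB [Ac [Bx HAB]]]]]].
  exists A; repeat split; auto. intros y Ay. apply (HAB y c Ay Bx).
Qed.

Lemma open_inv V : open (tg_top G) V -> open (tg_top G) (fun x => V x^-1).
Proof. apply tg_inv_cont. Qed.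
End Translations.

Section Subgroup.
Variable G : topgroup.
Variable P : G -> Prop.
Hypothesis P1 : P one.
Hypothesis PM : forall x y, P x -> P y -> P (x *g y).
Hypothesis PV : forall x, P x -> P x^-1.

Definition sub_car := {x : G | P x}.
Definition subval (k : sub_car) : G := proj1_sig k.

Lemma subval_inj (a b : sub_car) : subval a = subval b -> a = b.
Proof. destruct a, b; simpl; intros E; subst. f_equal; apply proof_irrelevance. Qed.

Definition sub_open (U : sub_car -> Prop) : Prop :=
  exists V, open (tg_top G) V /\ forall k, U k <-> V (subval k).

Lemma sub_open_full : sub_open (fun _ => True).
Proof. exists (fun _ => True). split; [apply open_full | tauto]. Qed.

Lemma sub_open_inter U V : sub_open U -> sub_open V -> sub_open (fun x => U x /\ V x).
Proof.
  intros [U' [HU EU]] [V' [HV EV]]. exists (fun x => U' x /\ V' x). split.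
  - apply open_inter; auto.
  - intros k. rewrite EU, EV. tauto.
Qed.

Lemma sub_open_union (Fm : (sub_car -> Prop) -> Prop) :
  (forall U, Fm U -> sub_open U) -> sub_open (fun x => exists U, Fm U /\ U x).
Proof.
  intros HF.
  exists (fun y => exists V, (open (tg_top G) V /\
            exists U, Fm U /\ forall k, U k <-> V (subval k)) /\ V y).
  split.
  - apply open_union. intros V [? _]; auto.
  - intros k; split.
    + intros [U [FU Uk]]. destruct (HF U FU) as [V [HV EV]].
      exists V. split; [split; [auto | exists U; auto] | apply EV; auto].
    + intros [V [[HV [U [FU EU]]] Vk]]. exists U. split; auto. apply EU; auto.
Qed.

Definition sub_top : topology sub_car :=
  @Topology sub_car sub_open sub_open_full sub_open_inter sub_open_union.

Definition sub_mul (a b : sub_car) : sub_car :=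
  exist _ (subval a *g subval b) (PM _ _ (proj2_sig a) (proj2_sig b)).
Definition sub_inv (a : sub_car) : sub_car := exist _ (subval a)^-1 (PV _ (proj2_sig a)).
Definition sub_one : sub_car := exist _ one P1.

Lemma sub_mul_cont W : open sub_top W ->
  prod_open sub_top sub_top (fun p => W (sub_mul (fst p) (snd p))).
Proof.
  intros [V [HV EV]] [p q] Wpq. simpl in Wpq. apply EV in Wpq. simpl in Wpq.
  destruct (tg_mul_cont G V HV (subval p, subval q) Wpq)
    as [A [B [HA [HB [Ap [Bq HAB]]]]]].
  exists (fun k => A (subval k)), (fun k => B (subval k)).
  split; [exists A; split; [auto | tauto] |].
  split; [exists B; split; [auto | tauto] |].
  repeat split; auto. intros x y Ax By. apply EV. apply (HAB _ _ Ax By).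
Qed.

Lemma sub_inv_cont : continuous sub_top sub_top sub_inv.
Proof.
  intros U [V [HV EV]]. exists (fun x => V x^-1). split.
  - apply open_inv; auto.
  - intros k. apply EV.
Qed.

Definition subgroup_tg : topgroup.
Proof.
  refine (@TopGroup sub_car sub_mul sub_inv sub_one sub_top _ _ _ _ _
            sub_mul_cont sub_inv_cont);
    intros; apply subval_inj; simpl.
  - apply mulgA. - apply mul1g. - apply mulg1. - apply mulVg. - apply mulgV.
Defined.

Lemma subval_cont : continuous (tg_top subgroup_tg) (tg_top G) subval.
Proof. intros V HV. exists V. split; auto. tauto. Qed.
End Subgroup.
Arguments subval {G P} k.
Arguments subval_inj {G P} a b.

(* For a subgroup H, [rcoset_eq H a b] says that a and b lie in the same right
   coset: H a = H b.  When H is open, every coset is open. *)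
Section RightCosets.
Variable F : topgroup.
Variable H : F -> Prop.
Hypothesis H1 : H one.
Hypothesis HM : forall x y, H x -> H y -> H (x *g y).
Hypothesis HV : forall x, H x -> H x^-1.

Definition rcoset_eq (a b : F) : Prop := H (a *g b^-1).

Lemma rcoset_refl a : rcoset_eq a a.
Proof. unfold rcoset_eq. rewrite mulgV. auto. Qed.

Lemma rcoset_sym a b : rcoset_eq a b -> rcoset_eq b a.
Proof. unfold rcoset_eq. intros h. apply HV in h. rewrite invMg, invgK in h. auto. Qed.

Lemma rcoset_trans a b c : rcoset_eq a b -> rcoset_eq b c -> rcoset_eq a c.
Proof.
  unfold rcoset_eq. intros h1 h2. generalize (HM _ _ h1 h2). rewrite <- mulgA, mulKg. auto.
Qed.

Lemma rcoset_mulr a b v : rcoset_eq a b -> rcoset_eq (a *g v) (b *g v).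
Proof. unfold rcoset_eq. rewrite invMg, mulgA, mulgK. auto. Qed.

Lemma rcoset_one a : H a -> rcoset_eq a one.
Proof. unfold rcoset_eq. rewrite invg1, mulg1. auto. Qed.

Lemma rcoset_open (Hop : open (tg_top F) H) b : open (tg_top F) (fun a => rcoset_eq a b).
Proof. apply open_rmul; auto. Qed.

Lemma rcoset_open_lmul (Hop : open (tg_top F) H) t v :
  open (tg_top F) (fun w => rcoset_eq (t *g w) (t *g v)).
Proof. apply (open_lmul F t (fun y => rcoset_eq y (t *g v))), rcoset_open; auto. Qed.
End RightCosets.
Arguments rcoset_eq {F} H a b.

(* The topological wreath product  L wr (H\F) = (H\F -> L) x| F  of a topological
   group L by F, relative to an open subgroup H (of which the construction only
   uses that it is open and contains 1).  An element is a pair (a, v) of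
   a function a : F -> L constant on right cosets of H and of v : F; the product
   is (a, v)(b, w) = (t |-> a t * b (t v), v w).  The topology is the product
   topology of L^(H\F) (pointwise convergence) and F; because H is open, right
   translation of cosets is locally constant and the operations are continuous.
   This is the target into which maps on X are lifted to prove freeness of H. *)
Section Wreath.
Variable F L : topgroup.
Variable H : F -> Prop.
Hypothesis Hop : open (tg_top F) H.
Hypothesis H1 : H one.

Definition wr_car :=
  {p : (F -> L) * F | forall t t', rcoset_eq H t t' -> fst p t = fst p t'}.
Definition wr_fun (p : wr_car) : F -> L := fst (proj1_sig p).
Definition wr_base (p : wr_car) : F := snd (proj1_sig p).

Lemma wr_fun_coset (p : wr_car) t t' : rcoset_eq H t t' -> wr_fun p t = wr_fun p t'.
Proof. apply (proj2_sig p). Qed.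

Lemma wr_ext (p q : wr_car) :
  (forall t, wr_fun p t = wr_fun q t) -> wr_base p = wr_base q -> p = q.
Proof.
  destruct p as [[a v] hp], q as [[b w] hq]; unfold wr_fun, wr_base; simpl.
  intros E1 E2. assert (a = b) by (apply functional_extensionality; auto). subst.
  f_equal. apply proof_irrelevance.
Qed.

Lemma wr_mul_coset (p q : wr_car) t t' : rcoset_eq H t t' ->
  wr_fun p t *g wr_fun q (t *g wr_base p) = wr_fun p t' *g wr_fun q (t' *g wr_base p).
Proof.
  intros c. rewrite (wr_fun_coset p t t' c), (wr_fun_coset q (t *g wr_base p) (t' *g wr_base p)).
  - reflexivity.
  - apply rcoset_mulr; auto.
Qed.
Definition wr_mul (p q : wr_car) : wr_car :=
  exist _ ((fun t => wr_fun p t *g wr_fun q (t *g wr_base p)), wr_base p *g wr_base q)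
    (wr_mul_coset p q).

Lemma wr_inv_coset (p : wr_car) t t' : rcoset_eq H t t' ->
  (wr_fun p (t *g (wr_base p)^-1))^-1 = (wr_fun p (t' *g (wr_base p)^-1))^-1.
Proof. intros c. rewrite (wr_fun_coset p _ _ (rcoset_mulr F H _ _ _ c)). reflexivity. Qed.
Definition wr_inv (p : wr_car) : wr_car :=
  exist _ ((fun t => (wr_fun p (t *g (wr_base p)^-1))^-1), (wr_base p)^-1) (wr_inv_coset p).

Definition wr_one : wr_car :=
  exist (fun p : (F -> L) * F => forall t t', rcoset_eq H t t' -> fst p t = fst p t')
    ((fun _ => one), one) (fun t t' _ => eq_refl).

Lemma wr_fun_mul p q t : wr_fun (wr_mul p q) t = wr_fun p t *g wr_fun q (t *g wr_base p).
Proof. reflexivity. Qed.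
Lemma wr_base_mul p q : wr_base (wr_mul p q) = wr_base p *g wr_base q.
Proof. reflexivity. Qed.
Lemma wr_fun_inv p t : wr_fun (wr_inv p) t = (wr_fun p (t *g (wr_base p)^-1))^-1.
Proof. reflexivity. Qed.
Lemma wr_base_inv p : wr_base (wr_inv p) = (wr_base p)^-1.
Proof. reflexivity. Qed.
Lemma wr_fun_one t : wr_fun wr_one t = one. Proof. reflexivity. Qed.
Lemma wr_base_one : wr_base wr_one = one. Proof. reflexivity. Qed.

Inductive wr_basic : (wr_car -> Prop) -> Prop :=
| wr_basic_base O : open (tg_top F) O -> wr_basic (fun q => O (wr_base q))
| wr_basic_coord t V : open (tg_top L) V -> wr_basic (fun q => V (wr_fun q t))
| wr_basic_inter N1 N2 : wr_basic N1 -> wr_basic N2 -> wr_basic (fun q => N1 q /\ N2 q).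

Definition wr_open (U : wr_car -> Prop) : Prop :=
  forall p, U p -> exists N, wr_basic N /\ N p /\ forall q, N q -> U q.

Lemma wr_open_full : wr_open (fun _ => True).
Proof.
  intros p _. exists (fun q => (fun _ => True) (wr_base q)).
  split; [apply (wr_basic_base (fun _ => True)), open_full | auto].
Qed.

Lemma wr_open_inter U V : wr_open U -> wr_open V -> wr_open (fun x => U x /\ V x).
Proof.
  intros HU HV p [Up Vp].
  destruct (HU p Up) as [N1 [b1 [n1 h1]]]. destruct (HV p Vp) as [N2 [b2 [n2 h2]]].
  exists (fun q => N1 q /\ N2 q). split; [apply wr_basic_inter; auto |].
  split; auto. intros q [? ?]; auto.
Qed.

Lemma wr_open_union (Fm : (wr_car -> Prop) -> Prop) :
  (forall U, Fm U -> wr_open U) -> wr_open (fun x => exists U, Fm U /\ U x).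
Proof.
  intros HF p [U [FU Up]]. destruct (HF U FU p Up) as [N [b [n h]]].
  exists N. split; auto. split; auto. intros q Nq. exists U; auto.
Qed.

Definition wr_top : topology wr_car :=
  @Topology wr_car wr_open wr_open_full wr_open_inter wr_open_union.

Lemma wr_basic_open N : wr_basic N -> wr_open N.
Proof. intros b p Np. exists N; auto. Qed.

Lemma wr_cont_basic {Y} (tY : topology Y) (phi : Y -> wr_car) :
  (forall N, wr_basic N -> open tY (fun y => N (phi y))) -> continuous tY wr_top phi.
Proof.
  intros Hb U HU. apply open_local. intros y Uy.
  destruct (HU (phi y) Uy) as [N [b [Ny hN]]].
  exists (fun z => N (phi z)). split; [apply Hb; auto |]. split; auto.
Qed.

Lemma wr_mul_basic N : wr_basic N -> forall p q, N (wr_mul p q) ->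
  exists N1 N2, wr_basic N1 /\ wr_basic N2 /\ N1 p /\ N2 q /\
    forall p' q', N1 p' -> N2 q' -> N (wr_mul p' q').
Proof.
  induction 1 as [O HO | t V HVo | N1 N2 b1 IH1 b2 IH2]; intros p q Npq.
  - destruct (tg_mul_cont F O HO (wr_base p, wr_base q) Npq)
      as [A [B [HA [HB [Ap [Bq HAB]]]]]].
    exists (fun q => A (wr_base q)), (fun q => B (wr_base q)).
    repeat split; try apply wr_basic_base; auto.
    intros p' q' a b. apply (HAB _ _ a b).
  - (* near p, the base moves inside the coset of t (wr_base p), so the second
       factor is evaluated at the same coordinate *)
    destruct (tg_mul_cont L V HVo (wr_fun p t, wr_fun q (t *g wr_base p)) Npq)
      as [A [B [HA [HB [Ap [Bq HAB]]]]]].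
    exists (fun r => A (wr_fun r t) /\ rcoset_eq H (t *g wr_base r) (t *g wr_base p)),
           (fun r => B (wr_fun r (t *g wr_base p))).
    split; [apply (wr_basic_inter (fun r => A (wr_fun r t))
                     (fun r => rcoset_eq H (t *g wr_base r) (t *g wr_base p)));
            [apply wr_basic_coord; auto |
             apply (wr_basic_base (fun w => rcoset_eq H (t *g w) (t *g wr_base p))),
               rcoset_open_lmul; auto] |].
    split; [apply wr_basic_coord; auto |].
    split; [split; auto; apply rcoset_refl; auto |].
    split; auto.
    intros p' q' [a c] b. change (V (wr_fun p' t *g wr_fun q' (t *g wr_base p'))).
    rewrite (wr_fun_coset q' _ _ c). apply (HAB _ _ a b).
  - destruct Npq as [n1 n2].
    destruct (IH1 p q n1) as [A1 [B1 [a1 [b1' [c1 [d1 h1]]]]]].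
    destruct (IH2 p q n2) as [A2 [B2 [a2 [b2' [c2 [d2 h2]]]]]].
    exists (fun r => A1 r /\ A2 r), (fun r => B1 r /\ B2 r).
    repeat split; try apply wr_basic_inter; auto.
    + apply h1; tauto.
    + apply h2; tauto.
Qed.

Lemma wr_inv_basic N : wr_basic N -> forall p, N (wr_inv p) ->
  exists N', wr_basic N' /\ N' p /\ forall p', N' p' -> N (wr_inv p').
Proof.
  induction 1 as [O HO | t V HVo | N1 N2 b1 IH1 b2 IH2]; intros p Np.
  - exists (fun q => (fun x => O x^-1) (wr_base q)).
    split; [apply (wr_basic_base (fun x => O x^-1)), open_inv; auto | auto].
  - set (t' := t *g (wr_base p)^-1).
    exists (fun r => V (wr_fun r t')^-1 /\ rcoset_eq H (t *g (wr_base r)^-1) t').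
    split.
    + apply (wr_basic_inter (fun r => V (wr_fun r t')^-1)
               (fun r => rcoset_eq H (t *g (wr_base r)^-1) t')).
      * apply (wr_basic_coord t' (fun y => V y^-1)), open_inv; auto.
      * apply (wr_basic_base (fun v => rcoset_eq H (t *g v^-1) t')).
        apply (open_inv F (fun x => rcoset_eq H (t *g x) t')), rcoset_open_lmul; auto.
    + split; [split; auto; apply rcoset_refl; auto |].
      intros p' [a c]. change (V (wr_fun p' (t *g (wr_base p')^-1))^-1).
      rewrite (wr_fun_coset p' _ _ c). auto.
  - destruct Np as [n1 n2].
    destruct (IH1 p n1) as [A1 [a1 [c1 h1]]].
    destruct (IH2 p n2) as [A2 [a2 [c2 h2]]].
    exists (fun r => A1 r /\ A2 r). repeat split; try apply wr_basic_inter; auto.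
    + apply h1; tauto.
    + apply h2; tauto.
Qed.

Lemma wr_mul_cont W : wr_open W -> prod_open wr_top wr_top (fun p => W (wr_mul (fst p) (snd p))).
Proof.
  intros HW [p q] Wpq. simpl in Wpq. destruct (HW _ Wpq) as [N [b [Np hN]]].
  destruct (wr_mul_basic N b p q Np) as [N1 [N2 [b1 [b2 [n1 [n2 h]]]]]].
  exists N1, N2.
  refine (conj (wr_basic_open _ b1) (conj (wr_basic_open _ b2) (conj n1 (conj n2 _)))).
  intros x y a c. apply hN, h; auto.
Qed.

Lemma wr_inv_cont : continuous wr_top wr_top wr_inv.
Proof.
  intros U HU p Up. destruct (HU _ Up) as [N [b [Np hN]]].
  destruct (wr_inv_basic N b p Np) as [N' [b' [n' h]]].
  exists N'. repeat split; auto.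
Qed.

Definition wreath : topgroup.
Proof.
  refine (@TopGroup wr_car wr_mul wr_inv wr_one wr_top _ _ _ _ _ wr_mul_cont wr_inv_cont);
    intros; apply wr_ext; intros;
    rewrite ?wr_fun_mul, ?wr_base_mul, ?wr_fun_inv, ?wr_base_inv, ?wr_fun_one,
      ?wr_base_one, ?wr_fun_mul, ?wr_base_mul.
  - rewrite !mulgA. reflexivity.
  - apply mulgA.
  - rewrite mul1g, mulg1. reflexivity.
  - apply mul1g.
  - rewrite !mulg1. reflexivity.
  - apply mulg1.
  - apply mulVg.
  - apply mulVg.
  - rewrite mulgK. apply mulgV.
  - apply mulgV.
Defined.
End Wreath.
Arguments wr_fun {F L H} p _.
Arguments wr_base {F L H} p.
Arguments wr_ext {F L H} p q _ _.
Arguments wr_fun_coset {F L H} p t t' _.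
Arguments wr_fun_mul {F L H} p q t.
Arguments wr_fun_inv {F L H} p t.
Arguments wr_basic_base {F L H} O _.
Arguments wr_basic_coord {F L H} t V _.
Arguments wr_basic_open {F L H} N _ p _.
Arguments wr_cont_basic {F L H Y} tY phi _ V _.

Section FreeGroup.
Variable X : Type.
Variable tX : topology X.
Variable x0 : X.
Variable F : topgroup.
Variable sigma : X -> F.
Hypothesis Hfree : is_free_graev tX x0 F sigma.

Lemma free_hom_ext (K : topgroup) (g1 g2 : F -> K) :
  is_hom F K g1 -> continuous (tg_top F) (tg_top K) g1 ->
  is_hom F K g2 -> continuous (tg_top F) (tg_top K) g2 ->
  (forall x, g1 (sigma x) = g2 (sigma x)) -> forall y, g1 y = g2 y.
Proof.
  destruct Hfree as [sc [s0 Hu]]. intros h1 c1 h2 c2 E y.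
  assert (f0 : g1 (sigma x0) = one) by (rewrite s0; apply hom_one; auto).
  destruct (Hu K (fun x => g1 (sigma x)) (cont_comp _ _ _ _ _ sc c1) f0)
    as [g [_ [_ [_ Hg]]]].
  rewrite (Hg g1 h1 c1 (fun x => eq_refl) y), (Hg g2 h2 c2 (fun x => eq_sym (E x)) y).
  reflexivity.
Qed.

Definition letter (x : X) (b : bool) : F := if b then sigma x else (sigma x)^-1.

Inductive is_word : nat -> F -> Prop :=
| word_nil : is_word 0 one
| word_snoc n u x b : is_word n u -> is_word (S n) (u *g letter x b).

Lemma word_mul m v : is_word m v -> forall n u, is_word n u -> is_word (n + m) (u *g v).
Proof.
  induction 1 as [| m v x b hv IH]; intros n u hu.
  - rewrite mulg1, Nat.add_0_r. auto.
  - rewrite Nat.add_succ_r, mulgA. constructor. auto.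
Qed.

Lemma letter_inv x b : (letter x b)^-1 = one *g letter x (negb b).
Proof. rewrite mul1g. destruct b; simpl; rewrite ?invgK; reflexivity. Qed.

Lemma word_inv n v : is_word n v -> is_word n v^-1.
Proof.
  induction 1 as [| n u x b hu IH].
  - rewrite invg1. constructor.
  - rewrite invMg, letter_inv. replace (S n) with (1 + n) by lia.
    apply word_mul; auto. repeat constructor.
Qed.

(* Every element of F is a word: the words form a subgroup S containing
   sigma(X); the extension of sigma into S, followed by the inclusion, is a
   continuous endomorphism of F fixing sigma(X), hence the identity. *)
Lemma free_generated g : exists n, is_word n g.
Proof.
  pose proof Hfree as [sc [s0 Hu]].
  set (S := fun g => exists n, is_word n g).
  assert (S1 : S one) by (exists 0; constructor).
  assert (SM : forall a b, S a -> S b -> S (a *g b)).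
  { intros a b [n ha] [m hb]. exists (n + m). apply word_mul; auto. }
  assert (SV : forall a, S a -> S a^-1).
  { intros a [n ha]. exists n. apply word_inv; auto. }
  set (K := subgroup_tg F S S1 SM SV).
  assert (Sx : forall x, S (sigma x)).
  { intros x. exists 1. rewrite <- (mul1g _ (sigma x)). apply (word_snoc 0 one x true).
    constructor. }
  set (f := fun x => (exist _ (sigma x) (Sx x) : K)).
  assert (fc : continuous tX (tg_top K) f).
  { intros U [V [HV EV]]. apply (open_ext tX (fun x => V (sigma x))).
    - intros x. symmetry. apply EV.
    - apply sc; auto. }
  assert (f0 : f x0 = one) by (apply subval_inj; simpl; auto).
  destruct (Hu K f fc f0) as [h [hh [hc [he _]]]].
  assert (E : forall y, subval (h y) = y).
  { apply (free_hom_ext F (fun y => subval (h y)) (fun y => y)).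
    - intros a b. rewrite hh. reflexivity.
    - apply (cont_comp _ _ _ h subval hc). apply subval_cont.
    - intros a b; reflexivity.
    - intros V HV; auto.
    - intros x. rewrite he. reflexivity. }
  rewrite <- (E g). apply (proj2_sig (h g)).
Qed.
End FreeGroup.

Section Schreier.
Variable X : Type.
Variable F : topgroup.
Variable sigma : X -> F.
Variable H : F -> Prop.
Hypothesis H1 : H one.
Hypothesis HM : forall x y, H x -> H y -> H (x *g y).
Hypothesis HV : forall x, H x -> H x^-1.
Hypothesis generated : forall g, exists n, is_word X F sigma n g.

Notation letter := (letter X F sigma).
Notation is_word := (is_word X F sigma).

Inductive schreier (s : F -> F) : F -> Prop :=
| schreier_one : schreier s one
| schreier_snoc u x b : schreier s u -> s u = u ->
    s (u *g letter x b) = u *g letter x b -> schreier s (u *g letter x b).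

Record schreier_transversal (s : F -> F) : Prop := {
  st_coset : forall g, rcoset_eq H (s g) g;
  st_const : forall g g', rcoset_eq H g g' -> s g = s g';
  st_one : s one = one;
  st_schreier : forall g, schreier s (s g)
}.

Definition coset_word (n : nat) (g : F) : Prop :=
  exists u, is_word n u /\ rcoset_eq H u g.

Lemma coset_word_const n g g' : rcoset_eq H g g' -> coset_word n g -> coset_word n g'.
Proof. intros c [u [h c']]. exists u. split; auto. eapply rcoset_trans; eauto. Qed.

(* The transversal is built from three choices: the depth of a coset (the least
   length of a word in it), a canonical element of each coset, and for each
   coset of positive depth a parent coset of smaller depth together with the
   letter leading from it.  The representative of a coset is then the word
   read along the chain of parents. *)
Section Construction.
Variable depth : F -> nat.
Variable canon : F -> F.
Variable parent : F -> F * (X * bool).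
Hypothesis depth_word : forall g, coset_word (depth g) g.
Hypothesis depth_min : forall g m, coset_word m g -> depth g <= m.
Hypothesis canon_coset : forall g, rcoset_eq H (canon g) g.
Hypothesis canon_const : forall g g', rcoset_eq H g g' -> canon g = canon g'.
Hypothesis parent_spec : forall g m, depth g = S m ->
  depth (fst (parent g)) = m /\
  rcoset_eq H (fst (parent g) *g letter (fst (snd (parent g))) (snd (snd (parent g)))) g.

Lemma depth_const g g' : rcoset_eq H g g' -> depth g = depth g'.
Proof.
  intros c. apply Nat.le_antisymm; apply depth_min.
  - apply (coset_word_const _ g'); auto. apply rcoset_sym; auto.
  - apply (coset_word_const _ g); auto.
Qed.

Fixpoint chain (n : nat) (g : F) : F :=
  match n with
  | 0 => one
  | S m => let '(g', (x, b)) := parent g in chain m (canon g') *g letter x b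
  end.

Definition transversal (g : F) : F := chain (depth g) (canon g).

Lemma transversal_const g g' : rcoset_eq H g g' -> transversal g = transversal g'.
Proof. intros c. unfold transversal. rewrite (depth_const g g' c), (canon_const g g' c). auto. Qed.

Lemma transversal_spec n g : depth g = n ->
  rcoset_eq H (transversal g) g /\ schreier transversal (transversal g).
Proof.
  revert g; induction n as [| m IH]; intros g Eg.
  - unfold transversal. rewrite Eg. simpl. split; [| constructor].
    destruct (depth_word g) as [u [hu cu]]. rewrite Eg in hu. inversion hu; subst. auto.
  - assert (E1 : depth (canon g) = S m) by (rewrite <- Eg; apply depth_const, canon_coset).
    destruct (parent_spec (canon g) m E1) as [Ep cp].
    destruct (parent (canon g)) as [g' [x b]] eqn:Epar. simpl in Ep, cp.
    assert (Es : transversal g = transversal g' *g letter x b).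
    { unfold transversal at 1. rewrite Eg. simpl. rewrite Epar.
      unfold transversal. rewrite Ep. reflexivity. }
    destruct (IH g' Ep) as [c' sc'].
    assert (cg : rcoset_eq H (transversal g) g).
    { rewrite Es. apply (rcoset_trans F H HM _ (g' *g letter x b)).
      - apply rcoset_mulr; auto.
      - apply (rcoset_trans F H HM _ (canon g)); auto. }
    split; auto.
    rewrite Es in cg |- *. apply schreier_snoc; auto.
    + apply transversal_const; auto.
    + rewrite (transversal_const _ _ cg). exact Es.
Qed.

Lemma transversal_one : transversal one = one.
Proof.
  assert (E : depth one = 0).
  { assert (depth one <= 0); [| lia]. apply depth_min.
    exists one. split; [constructor | apply rcoset_refl; auto]. }
  unfold transversal. rewrite E. reflexivity.
Qed.

Lemma transversal_is_schreier : schreier_transversal transversal.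
Proof.
  split.
  - intros g. apply (transversal_spec _ g eq_refl).
  - apply transversal_const.
  - apply transversal_one.
  - intros g. apply (transversal_spec _ g eq_refl).
Qed.
End Construction.

Lemma least_nat (P : nat -> Prop) :
  (exists n, P n) -> exists n, P n /\ forall m, P m -> n <= m.
Proof.
  intros Hn. destruct (dec_inh_nat_subset_has_unique_least_element P
                         (fun n => classic (P n)) Hn) as [n [Hl _]].
  eauto.
Qed.

(* A shortest word in the coset of g ends with a letter whose removal yields a
   shortest word of a coset of depth one less.  (The point x0 only serves as a
   dummy value for cosets of depth 0.) *)
Lemma parent_exists (x0 : X) (depth : F -> nat) :
  (forall g, coset_word (depth g) g) -> (forall g m, coset_word m g -> depth g <= m) ->
  forall g, exists p : F * (X * bool), forall m, depth g = S m ->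
    depth (fst p) = m /\ rcoset_eq H (fst p *g letter (fst (snd p)) (snd (snd p))) g.
Proof.
  intros depth_word depth_min g. destruct (depth g) as [| m] eqn:E.
  - exists (one, (x0, true)). intros m h; discriminate.
  - destruct (depth_word g) as [u [hu cu]]. rewrite E in hu.
    inversion hu as [| m' u' x b hu' Em Eu]; subst.
    exists (u', (x, b)). intros m2 h2. injection h2 as <-. simpl. split; auto.
    apply Nat.le_antisymm.
    + apply depth_min. exists u'. split; auto. apply rcoset_refl; auto.
    + destruct (depth_word u') as [v [hv cv]].
      assert (S (depth u') >= S m); [| lia].
      rewrite <- E. apply depth_min. exists (v *g letter x b). split.
      * constructor; auto.
      * eapply rcoset_trans; eauto. apply rcoset_mulr; auto.
Qed.

Lemma coset_canon_exists : exists canon : F -> F,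
  (forall g, rcoset_eq H (canon g) g) /\
  (forall g g', rcoset_eq H g g' -> canon g = canon g').
Proof.
  destruct (choice (fun (C : F -> Prop) c => (exists g, C g) -> C c)) as [pick Hpick].
  { intros C. destruct (classic (exists g, C g)) as [[g Cg] | n].
    - exists g. auto.
    - exists one. intros h; contradiction. }
  exists (fun g => pick (fun y => rcoset_eq H y g)). split.
  - intros g. apply (Hpick (fun y => rcoset_eq H y g)). exists g. apply rcoset_refl; auto.
  - intros g g' c. f_equal. apply functional_extensionality. intros y.
    apply propositional_extensionality. split; intros h.
    + eapply rcoset_trans; eauto.
    + eapply rcoset_trans; eauto. apply rcoset_sym; auto.
Qed.

Lemma schreier_transversal_exists (x0 : X) : exists s, schreier_transversal s.
Proof.
  destruct (choice (fun g n => coset_word n g /\ forall m, coset_word m g -> n <= m))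
    as [depth Hdepth].
  { intros g. apply least_nat. destruct (generated g) as [n hn].
    exists n, g. split; auto. apply rcoset_refl; auto. }
  destruct coset_canon_exists as [canon [canon_coset canon_const]].
  destruct (choice (fun g p => forall m, depth g = S m -> depth (fst p) = m /\
            rcoset_eq H (fst p *g letter (fst (snd p)) (snd (snd p))) g)) as [parent Hparent].
  { apply (parent_exists x0); apply Hdepth. }
  exists (transversal depth canon parent).
  apply transversal_is_schreier; auto; apply Hdepth.
Qed.
End Schreier.

(* The generators of H are the
   elements  elt t w = s(t) w s(t w)^-1.  The based space Z has, besides the base
   point, one point for each pair (v, x) with v = s(v) a representative and
   v sigma(x) not a representative; its topology is the quotient topology from
   (H\F discrete) x X, collapsing the pairs in the Schreier tree to the base
   point. *)
Section SchreierSpace.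
Variable X : Type.
Variable tX : topology X.
Variable x0 : X.
Variable F : topgroup.
Variable sigma : X -> F.
Hypothesis Hfree : is_free_graev tX x0 F sigma.
Variable H : F -> Prop.
Hypothesis Hop : open (tg_top F) H.
Hypothesis H1 : H one.
Hypothesis HM : forall x y, H x -> H y -> H (x *g y).
Hypothesis HV : forall x, H x -> H x^-1.
Variable s : F -> F.
Hypothesis Hs : schreier_transversal X F sigma H s.

Lemma sigma_cont : continuous tX (tg_top F) sigma. Proof. apply Hfree. Qed.
Lemma sigma_x0 : sigma x0 = one. Proof. apply Hfree. Qed.

Lemma s_coset g : rcoset_eq H (s g) g. Proof. apply Hs. Qed.
Lemma s_const g g' : rcoset_eq H g g' -> s g = s g'. Proof. apply Hs. Qed.
Lemma s_one : s one = one. Proof. apply Hs. Qed.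
Lemma s_idem u : s (s u) = s u. Proof. apply s_const, s_coset. Qed.
Lemma s_mulr u v : s (s u *g v) = s (u *g v). Proof. apply s_const, rcoset_mulr, s_coset. Qed.

Definition K : topgroup := subgroup_tg F H H1 HM HV.

Lemma elt_mem t w : H (s t *g w *g (s (t *g w))^-1).
Proof.
  change (rcoset_eq H (s t *g w) (s (t *g w))).
  apply (rcoset_trans F H HM _ (t *g w)).
  - apply rcoset_mulr, s_coset.
  - apply rcoset_sym, s_coset; auto.
Qed.

Definition elt (t w : F) : K := exist _ (s t *g w *g (s (t *g w))^-1) (elt_mem t w).

Lemma elt_const t t' w : rcoset_eq H t t' -> elt t w = elt t' w.
Proof.
  intros c. apply subval_inj. simpl.
  rewrite (s_const t t' c), (s_const (t *g w) (t' *g w)); auto. apply rcoset_mulr; auto.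
Qed.

(* The cocycle identity making w |-> (t |-> elt t w) a homomorphism. *)
Lemma elt_mul t a b : elt t (a *g b) = elt t a *g elt (t *g a) b.
Proof.
  apply subval_inj. simpl. rewrite !mulgA, mulgKV. reflexivity.
Qed.

Lemma elt_one_l (k : K) : elt one (subval k) = k.
Proof.
  apply subval_inj. simpl. rewrite s_one, mul1g.
  rewrite (s_const (subval k) one), s_one, invg1, mulg1; auto.
  apply rcoset_one, (proj2_sig k).
Qed.

(* For fixed t, w |-> elt t w is continuous: near w1 the factor s(t w) is
   constant, because the coset of t w is. *)
Lemma elt_cont t : continuous (tg_top F) (tg_top K) (elt t).
Proof.
  intros U [V [HVo EV]].
  apply (open_ext _ (fun w => V (s t *g w *g (s (t *g w))^-1))).
  { intros w. symmetry. apply (EV (elt t w)). }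
  apply open_local. intros w1 Vw1.
  exists (fun w => rcoset_eq H (t *g w) (t *g w1) /\ V (s t *g w *g (s (t *g w1))^-1)).
  split; [apply open_inter |].
  - apply rcoset_open_lmul; auto.
  - apply (open_lmul F (s t) (fun y => V (y *g (s (t *g w1))^-1))), open_rmul; auto.
  - split; [split; auto; apply rcoset_refl; auto |].
    intros w [cw Vw]. rewrite (s_const _ _ cw). auto.
Qed.

(* The edge from the representative v labelled x lies in the Schreier tree. *)
Definition in_tree (v : F) (x : X) : Prop := v *g sigma x = s (v *g sigma x).

Definition Zpt := {p : F * X | s (fst p) = fst p /\ ~ in_tree (fst p) (snd p)}.
Definition Zcar := option Zpt.

Definition zproj (u : F) (x : X) : Zcar :=
  match excluded_middle_informative (in_tree (s u) x) with
  | left _ => None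
  | right n => Some (exist _ (s u, x) (conj (s_idem u) n))
  end.

Lemma zproj_none u x : in_tree (s u) x -> zproj u x = None.
Proof.
  intros c. unfold zproj. destruct (excluded_middle_informative (in_tree (s u) x)); auto.
  contradiction.
Qed.

Lemma zproj_some u x (p : Zpt) : proj1_sig p = (s u, x) -> zproj u x = Some p.
Proof.
  intros E. unfold zproj. destruct p as [[v y] [h1 h2]]. simpl in E. injection E as -> ->.
  destruct (excluded_middle_informative (in_tree (s u) x)) as [c | n].
  - contradiction.
  - do 2 f_equal. apply proof_irrelevance.
Qed.

Lemma zproj_const u u' x : rcoset_eq H u u' -> zproj u x = zproj u' x.
Proof.
  intros c. assert (E : s u = s u') by (apply s_const; auto).
  destruct (classic (in_tree (s u) x)) as [h | n].
  - rewrite !zproj_none; auto. rewrite <- E; auto.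
  - rewrite (zproj_some u x (exist _ (s u, x) (conj (s_idem u) n))); auto.
    symmetry. apply zproj_some. simpl. rewrite E. auto.
Qed.

Definition Zopen (U : Zcar -> Prop) : Prop := forall u, open tX (fun x => U (zproj u x)).

Lemma Zopen_full : Zopen (fun _ => True).
Proof. intros u. apply open_full. Qed.

Lemma Zopen_inter U V : Zopen U -> Zopen V -> Zopen (fun x => U x /\ V x).
Proof. intros hU hV u. apply open_inter; auto. Qed.

Lemma Zopen_union (Fm : (Zcar -> Prop) -> Prop) :
  (forall U, Fm U -> Zopen U) -> Zopen (fun x => exists U, Fm U /\ U x).
Proof.
  intros hF u.
  apply (open_ext tX (fun x => exists O, (exists U, Fm U /\ O = (fun y => U (zproj u y))) /\ O x)).
  - intros x; split.
    + intros [O [[U [FU ->]] Ox]]. exists U; auto.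
    + intros [U [FU Ux]]. exists (fun y => U (zproj u y)). split; auto. exists U; auto.
  - apply open_union. intros O [U [FU ->]]. apply hF; auto.
Qed.

Definition Ztop : topology Zcar := @Topology Zcar Zopen Zopen_full Zopen_inter Zopen_union.

Definition tau (z : Zcar) : K :=
  match z with
  | None => one
  | Some p => elt (fst (proj1_sig p)) (sigma (snd (proj1_sig p)))
  end.

Lemma tau_zproj u x : tau (zproj u x) = elt u (sigma x).
Proof.
  destruct (classic (in_tree (s u) x)) as [c | n].
  - rewrite zproj_none; auto. apply subval_inj. simpl. unfold in_tree in c.
    rewrite <- s_mulr, <- c, mulgV. reflexivity.
  - rewrite (zproj_some u x (exist _ (s u, x) (conj (s_idem u) n))); auto. simpl.
    apply elt_const, s_coset.
Qed.

Lemma tau_cont : continuous Ztop (tg_top K) tau.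
Proof.
  intros U HU u.
  apply (open_ext tX (fun x => (fun w => U (elt u w)) (sigma x))).
  - intros x. rewrite tau_zproj. reflexivity.
  - apply (sigma_cont (fun w => U (elt u w))), elt_cont; auto.
Qed.

(* Given a based continuous f : Z -> L, lift it to
   the wreath product: Phi(x) = (t |-> f (zproj t x), sigma x) is a based
   continuous map X -> L wr (H\F), so it extends to a continuous homomorphism
   G : F -> L wr (H\F).  Evaluating the function coordinate of G at the trivial
   coset then gives the extension of f to H. *)
Section Extension.
Variable L : topgroup.
Variable f : Zcar -> L.
Hypothesis fc : continuous Ztop (tg_top L) f.
Hypothesis f0 : f None = one.

Notation W := (wreath F L H Hop H1).

Lemma f_in_tree u x : in_tree (s u) x -> f (zproj u x) = one.
Proof. intros h. rewrite zproj_none; auto. Qed.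

Definition Phi (x : X) : W :=
  exist (fun p : (F -> L) * F => forall t t', rcoset_eq H t t' -> fst p t = fst p t')
    ((fun t => f (zproj t x)), sigma x)
    (fun t t' c => f_equal f (zproj_const t t' x c)).

Lemma Phi_cont : continuous tX (tg_top W) Phi.
Proof.
  apply wr_cont_basic. induction 1 as [O HO | t V HVo | N1 N2 b1 IH1 b2 IH2].
  - apply (sigma_cont O HO).
  - apply (fc V HVo t).
  - apply open_inter; auto.
Qed.

Lemma Phi_x0 : Phi x0 = one.
Proof.
  apply wr_ext.
  - intros t. change (f (zproj t x0) = one). apply f_in_tree.
    unfold in_tree. rewrite sigma_x0, !mulg1, s_idem. reflexivity.
  - apply sigma_x0.
Qed.

Variable G : F -> W.
Hypothesis Gh : is_hom F W G.
Hypothesis Gc : continuous (tg_top F) (tg_top W) G.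
Hypothesis Ge : forall x, G (sigma x) = Phi x.

Lemma G_base y : wr_base (G y) = y.
Proof.
  apply (free_hom_ext X tX x0 F sigma Hfree F (fun y => wr_base (G y)) (fun y => y)).
  - intros a b. rewrite Gh. reflexivity.
  - intros V HVo. apply (Gc (fun p => V (wr_base p))), wr_basic_open, wr_basic_base; auto.
  - intros a b; reflexivity.
  - intros V HVo; auto.
  - intros x. rewrite Ge. reflexivity.
Qed.

Lemma G_fun_mul a b t : wr_fun (G (a *g b)) t = wr_fun (G a) t *g wr_fun (G b) (t *g a).
Proof. rewrite Gh. etransitivity; [apply wr_fun_mul |]. rewrite G_base. reflexivity. Qed.

Lemma G_fun_inv a t : wr_fun (G a^-1) t = (wr_fun (G a) (t *g a^-1))^-1.
Proof.
  rewrite (hom_inv F W G Gh). etransitivity; [apply wr_fun_inv |]. rewrite G_base.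
  reflexivity.
Qed.

Lemma G_fun_one t : wr_fun (G one) t = one.
Proof. rewrite (hom_one F W G Gh). reflexivity. Qed.

(* This is where the Schreier property is used: along the tree the lifted
   letters are trivial, so G is trivial at the base coset on representatives. *)
Lemma G_fun_schreier u : schreier X F sigma s u -> wr_fun (G u) one = one.
Proof.
  induction 1 as [| u x b hu IH su sux].
  - apply G_fun_one.
  - rewrite G_fun_mul, IH, !mul1g. destruct b; simpl in sux |- *.
    + rewrite Ge. apply f_in_tree. unfold in_tree. rewrite su, sux. reflexivity.
    + rewrite G_fun_inv, Ge. change ((f (zproj (u *g (sigma x)^-1) x))^-1 = one).
      rewrite f_in_tree, invg1; auto.
      unfold in_tree. rewrite sux, mulgKV, su. reflexivity.
Qed.

Definition ext (k : K) : L := wr_fun (G (subval k)) one.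

Lemma ext_elt t w : ext (elt t w) = wr_fun (G w) t.
Proof.
  unfold ext. simpl. rewrite !G_fun_mul, !mul1g, G_fun_inv.
  assert (Hst : schreier X F sigma s (s t)) by apply Hs.
  assert (Hstw : schreier X F sigma s (s (t *g w))) by apply Hs.
  rewrite (wr_fun_coset (G (s (t *g w))) _ one), G_fun_schreier, G_fun_schreier, invg1,
    mul1g, mulg1; auto.
  - apply wr_fun_coset, s_coset.
  - apply rcoset_one, elt_mem.
Qed.

Lemma ext_hom : is_hom K L ext.
Proof.
  intros k1 k2. unfold ext. change (subval (k1 *g k2)) with (subval k1 *g subval k2).
  rewrite G_fun_mul. f_equal. apply wr_fun_coset. rewrite mul1g.
  apply rcoset_one, (proj2_sig k1).
Qed.

Lemma ext_cont : continuous (tg_top K) (tg_top L) ext.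
Proof.
  intros V HVo. exists (fun y => V (wr_fun (G y) one)). split.
  - apply (Gc (fun p => V (wr_fun p one))), wr_basic_open, wr_basic_coord; auto.
  - intros k. tauto.
Qed.

Lemma ext_tau z : ext (tau z) = f z.
Proof.
  destruct z as [[[v x] [hv hx]] |]; simpl.
  - rewrite ext_elt, Ge. change (f (zproj v x) = f (Some (exist _ (v, x) (conj hv hx)))).
    f_equal. apply zproj_some. simpl in hv |- *. rewrite hv. reflexivity.
  - unfold ext. simpl. rewrite G_fun_one. auto.
Qed.
End Extension.

(* Uniqueness: a continuous homomorphism g : K -> L is recovered from its
   lift w |-> (t |-> g (elt t w), w), a continuous homomorphism F -> L wr (H\F)
   which agrees with Phi on sigma(X) when g extends f. *)
Section Uniqueness.
Variable L : topgroup.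
Variable f : Zcar -> L.
Variable g : K -> L.
Hypothesis gh : is_hom K L g.
Hypothesis gc : continuous (tg_top K) (tg_top L) g.
Hypothesis ge : forall z, g (tau z) = f z.

Notation W := (wreath F L H Hop H1).

Definition lift (w : F) : W :=
  exist (fun p : (F -> L) * F => forall t t', rcoset_eq H t t' -> fst p t = fst p t')
    ((fun t => g (elt t w)), w)
    (fun t t' c => f_equal g (elt_const t t' w c)).

Lemma lift_hom : is_hom F W lift.
Proof.
  intros a b. apply wr_ext.
  - intros t. change (g (elt t (a *g b)) = g (elt t a) *g g (elt (t *g a) b)).
    rewrite <- gh, elt_mul. reflexivity.
  - reflexivity.
Qed.

Lemma lift_cont : continuous (tg_top F) (tg_top W) lift.
Proof.
  apply wr_cont_basic. induction 1 as [O HO | t V HVo | N1 N2 b1 IH1 b2 IH2].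
  - apply HO.
  - apply (cont_comp _ _ _ (elt t) g (elt_cont t) gc V HVo).
  - apply open_inter; auto.
Qed.

Lemma lift_sigma x : lift (sigma x) = Phi L f x.
Proof.
  apply wr_ext.
  - intros t. change (g (elt t (sigma x)) = f (zproj t x)). rewrite <- ge, tau_zproj.
    reflexivity.
  - reflexivity.
Qed.

Lemma ext_unique (G : F -> W) : is_hom F W G -> continuous (tg_top F) (tg_top W) G ->
  (forall x, G (sigma x) = Phi L f x) -> forall k, g k = ext L G k.
Proof.
  intros Gh Gc Ge k.
  assert (E : lift (subval k) = G (subval k)).
  { apply (free_hom_ext X tX x0 F sigma Hfree W); auto using lift_hom, lift_cont.
    intros x. rewrite lift_sigma, Ge. reflexivity. }
  unfold ext. rewrite <- E. change (g k = g (elt one (subval k))). rewrite elt_one_l.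
  reflexivity.
Qed.
End Uniqueness.

Theorem schreier_free : is_free_graev Ztop None K tau.
Proof.
  split; [apply tau_cont | split; [reflexivity |]].
  intros L f fc f0.
  destruct Hfree as [_ [_ Hu]].
  destruct (Hu _ (Phi L f) (Phi_cont L f fc) (Phi_x0 L f f0)) as [G [Gh [Gc [Ge _]]]].
  exists (ext L G). split; [| split; [| split]].
  - apply (ext_hom L f G Gh Gc Ge).
  - apply (ext_cont L G Gc).
  - apply (ext_tau L f f0 G Gh Gc Ge).
  - intros g' gh' gc' ge'. apply (ext_unique L f g' gh' gc' ge' G Gh Gc Ge).
Qed.
End SchreierSpace.

Theorem theorem1 (X : Type) (tX : topology X) (x0 : X)
  (F : topgroup) (sigma : X -> F) (Hfree : is_free_graev tX x0 F sigma)
  (H : F -> Prop) (HH : open_subgroup F H) :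
  exists (Z : Type) (tZ : topology Z) (z0 : Z) (K : topgroup) (tau : Z -> K)
         (phi : K -> F),
    is_free_graev tZ z0 K tau /\ topgroup_iso_onto K F H phi.
Proof.
  destruct HH as [Hop [H1 [HM HV]]].
  destruct (schreier_transversal_exists X F sigma H H1 HM HV
              (free_generated X tX x0 F sigma Hfree) x0) as [s Hs].
  exists (Zcar X F sigma s), (Ztop X tX F sigma H s Hs), None, (K F H H1 HM HV),
    (tau X F sigma H H1 HM HV s Hs), subval.
  split; [apply (schreier_free X tX x0 F sigma Hfree H Hop H1 HM HV s Hs) |].
  split; [| split; [| split; [| split]]].
  - intros a b. reflexivity.
  - intros a b E. apply subval_inj. auto.
  - intros y; split.
    + intros hy. exists (exist _ y hy). reflexivity.
    + intros [k <-]. apply (proj2_sig k).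
  - apply subval_cont.
  - intros U HU. exact HU.
Qed.
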